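(* Let $n\ge 2$. Each inverse subsemigroup of $(S_n,\cdot,{}^{-1})$ generated by fewer than $n$ elements lies in the variety of inverse semigroups (algebras of type $(2,1)$) generated by the $6$-element Brandt monoid $(B_2^1,\cdot,{}^{-1})$.
   Context: For $n\ge2$, $(S_n,\cdot,{}^{-1})$ is the inverse semigroup of partial one-to-one transformations of $\{0,1,\dots,3n+2\}$ (acting on the right, composition $x(\alpha\beta)=(x\alpha)\beta$, ${}^{-1}$ the inverse partial map) generated by the $n+1$ partial maps $\chi:\ n\mapsto 2n+1,\ n+1\mapsto 2n+2$ (undefined elsewhere) and, for $i=1,\dots,n$, $\chi_i:\ i-1\mapsto i,\ n+1+i\mapsto n+i,\ 2n+1+i\mapsto 2n+2+i$ (undefined elsewhere). The $6$-element Brandt monoid is $B_2^1$, where $B_2=\langle c,d\mid cdc=c,\ dcd=d,\ c^2=d^2=0\rangle=\{c,d,cd,dc,0\}$ and $1$ is an adjoined identity; it is an inverse semigroup, $s^{-1}$ denoting the unique inverse of $s$ (so $c^{-1}=d$, $d^{-1}=c$, and $1,cd,dc,0$ are self-inverse). *)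

From mathcomp Require Import all_boot.
Set Implicit Arguments. Unset Strict Implicit. Unset Printing Implicit Defensive.

Inductive term : Type :=
| TVar : nat -> term
| TMul : term -> term -> term
| TInv : term -> term.

Fixpoint teval (A : Type) (mul : A -> A -> A) (inv : A -> A) (v : nat -> A)
  (t : term) : A :=
  match t with
  | TVar k => v k
  | TMul s u => mul (teval mul inv v s) (teval mul inv v u)
  | TInv s => inv (teval mul inv v s)
  end.

Definition satisfies (A : Type) (mul : A -> A -> A) (inv : A -> A) (s t : term) :=
  forall v : nat -> A, teval mul inv v s = teval mul inv v t.

Definition satisfies_on (A : Type) (mul : A -> A -> A) (inv : A -> A)
  (P : A -> Prop) (s t : term) :=
  forall v : nat -> A, (forall k, P (v k)) ->
    teval mul inv v s = teval mul inv v t.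

(* B_2 realised by matrix units: E i j * E k l = (j == k) ? E i l : 0 ;
   c = E false true, d = E true false, cd = E false false, dc = E true true. *)
Inductive B21 : Type := BOne | BZero | BE of bool & bool.

Definition B21_mul (x y : B21) : B21 :=
  match x, y with
  | BOne, _ => y
  | _, BOne => x
  | BZero, _ => BZero
  | _, BZero => BZero
  | BE i j, BE k l => if j == k then BE i l else BZero
  end.

Definition B21_inv (x : B21) : B21 :=
  match x with
  | BE i j => BE j i
  | _ => x
  end.

Definition Bc : B21 := BE false true.
Definition Bd : B21 := BE true false.

Definition N3 (n : nat) := (3 * n + 3)%N.

Definition pinj (n : nat) := {ffun 'I_(N3 n) -> option 'I_(N3 n)}.

(* composition acting on the right: x (a b) = (x a) b *)
Definition pmul (n : nat) (a b : pinj n) : pinj n :=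
  [ffun x => obind b (a x)].

(* inverse partial map (the true inverse for injective partial maps) *)
Definition pinv (n : nat) (a : pinj n) : pinj n :=
  [ffun y => [pick x | a x == Some y]].

Definition pmap_of (n : nat) (f : nat -> option nat) : pinj n :=
  [ffun x => obind (fun y => insub y) (f (nat_of_ord x))].

Definition chi_fun (n : nat) (x : nat) : option nat :=
  if x == n then Some (2 * n + 1)%N
  else if x == n.+1 then Some (2 * n + 2)%N
  else None.

Definition chii_fun (n i : nat) (x : nat) : option nat :=
  if x == i.-1 then Some i
  else if x == (n + 1 + i)%N then Some (n + i)%N
  else if x == (2 * n + 1 + i)%N then Some (2 * n + 2 + i)%N
  else None.

Definition chi (n : nat) : pinj n := pmap_of n (chi_fun n).
Definition chii (n i : nat) : pinj n := pmap_of n (chii_fun n i).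

Inductive gen (n : nat) (X : pinj n -> Prop) : pinj n -> Prop :=
| gen_base a : X a -> gen X a
| gen_mul a b : gen X a -> gen X b -> gen X (pmul a b)
| gen_inv a : gen X a -> gen X (pinv a).

Definition Sn_gens (n : nat) (a : pinj n) : Prop :=
  a = chi n \/ exists i, (1 <= i <= n)%N /\ a = chii n i.

Definition in_Sn (n : nat) (a : pinj n) : Prop := gen (@Sn_gens n) a.

Definition gen_seq (n : nat) (X : seq (pinj n)) : pinj n -> Prop :=
  gen (fun a => a \in X).

(* an inverse subsemigroup (given by its carrier P, closed under pmul, pinv)
   lies in the variety generated by B_2^1: it satisfies every identity of B_2^1 *)
Definition in_var_B21 (n : nat) (P : pinj n -> Prop) : Prop :=
  forall s t : term, satisfies B21_mul B21_inv s t ->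
    satisfies_on (@pmul n) (@pinv n) P s t.

(* In the coordinates obtained by reversing the middle block {n+1, ..., 2n+1},
   every generator, hence every element of S_n, is a restriction of a
   translation, and its domain lies in a triple made of a lower point V, the
   upper point V + 2n + 2 and a middle point whose index is adjacent to V
   modulo n + 1.
   Colour the points with two colours so that every element of X induces an
   element of B_2^1 on the colours; then a term mapping x to y in <X> maps the
   colour of x to that of y when evaluated in B_2^1 at the induced elements.
   Each element of X traverses the middle step of at most one of chi, chi_1,
   ..., chi_n, so as X has fewer than n elements some of these steps are free,
   and the colouring may switch across them.  Such colourings separate points
   and detect arguments outside a domain and values outside a range, so both
   sides of an identity of B_2^1 define the same partial map. *)

From mathcomp Require Import all_boot zify.
Set Implicit Arguments. Unset Strict Implicit. Unset Printing Implicit Defensive.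

(* [BE i j] acts on [bool] as the partial bijection [i |-> j]: this realises
   B_2^1 as the partial bijections of a two-element set other than the
   transposition. *)
Definition B21_act (b : B21) (x : bool) : option bool :=
  match b with
  | BOne => Some x
  | BZero => None
  | BE i j => if x == i then Some j else None
  end.

Lemma B21_act_mul b c x : B21_act (B21_mul b c) x = obind (B21_act c) (B21_act b x).
Proof. by case: b => [||[] []]; case: c => [||[] []]; case: x. Qed.

Lemma B21_act_inv b x y : B21_act (B21_inv b) y = Some x <-> B21_act b x = Some y.
Proof. by case: b => [||[] []]; case: x; case: y. Qed.

Lemma B21_act_inj b x x' y : B21_act b x = Some y -> B21_act b x' = Some y -> x = x'.
Proof. by case: b => [||[] []]; case: x; case: x'; case: y. Qed.

Section PartialInjections.
Variable n : nat.
Implicit Types a b : pinj n.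

Lemma pmulE a b x : pmul a b x = obind b (a x).
Proof. by rewrite ffunE. Qed.

Lemma pinv_Some a y x : pinv a y = Some x -> a x = Some y.
Proof. by rewrite ffunE; case: pickP => // z /eqP az [<-]. Qed.

Lemma pinv_None a y : pinv a y = None -> forall x, a x <> Some y.
Proof. by rewrite ffunE; case: pickP => // none _ x ax; move: (none x); rewrite ax eqxx. Qed.

Definition pinjective a := forall x x' y, a x = Some y -> a x' = Some y -> x = x'.

Lemma pinvP a x y : pinjective a -> a x = Some y -> pinv a y = Some x.
Proof.
move=> a_inj ax; rewrite ffunE; case: pickP => [z /eqP az | none].
  by rewrite (a_inj _ _ _ az ax).
by move: (none x); rewrite ax eqxx.
Qed.

Lemma pinjective_pmul a b : pinjective a -> pinjective b -> pinjective (pmul a b).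
Proof.
move=> a_inj b_inj x x' y; rewrite !pmulE.
case ax: (a x) => [u|] //=; case ax': (a x') => [u'|] //= bu bu'.
by rewrite (b_inj _ _ _ bu bu') in ax; apply: a_inj ax ax'.
Qed.

Lemma pinjective_pinv a : pinjective (pinv a).
Proof. by move=> x x' y /pinv_Some ay /pinv_Some; rewrite ay => -[]. Qed.

End PartialInjections.

Section Colourings.
Variable n : nat.
Implicit Types (a : pinj n) (k : 'I_(N3 n) -> bool).

(* Two arrows coloured [u |-> v] and [u' |-> v'] fit into one element of B_2^1. *)
Definition coherent (u v u' v' : bool) := (u == v) && (u' == v') || (u == u') && (v == v').

Lemma coherent_diag (u v : bool) : coherent u u v v.
Proof. by rewrite /coherent !eqxx. Qed.

Lemma coherent_refl (u v : bool) : coherent u v u v.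
Proof. by rewrite /coherent !eqxx orbT. Qed.

Lemma coherent_sym (u v u' v' : bool) : coherent u v u' v' = coherent u' v' u v.
Proof. by case: u; case: v; case: u'; case: v'. Qed.

Lemma coherent_rev (u v u' v' : bool) : coherent u v u' v' = coherent v u v' u'.
Proof. by case: u; case: v; case: u'; case: v'. Qed.

Definition respects k a :=
  forall x x' y y', a x = Some y -> a x' = Some y' -> coherent (k x) (k y) (k x') (k y').

Definition has_arrow k a (b c : bool) :=
  [exists x, (k x == b) && (if a x is Some y then k y == c else false)].

Lemma has_arrowP k a (b c : bool) :
  reflect (exists x y, [/\ a x = Some y, k x = b & k y = c]) (has_arrow k a b c).
Proof.
apply: (iffP existsP) => [[x /andP[/eqP kx]] | [x [y [axy <- <-]]]].
  by case ax: (a x) => [y|] // /eqP ky; exists x, y.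
by exists x; rewrite axy !eqxx.
Qed.

Definition colour_quot k a : B21 :=
  if has_arrow k a false true then BE false true else
  if has_arrow k a true false then BE true false else
  match has_arrow k a false false, has_arrow k a true true with
  | true, true => BOne
  | true, false => BE false false
  | false, true => BE true true
  | false, false => BZero
  end.

Lemma colour_quotP k a x y : respects k a -> a x = Some y ->
  B21_act (colour_quot k a) (k x) = Some (k y).
Proof.
move=> ka axy.
have kxy : has_arrow k a (k x) (k y) by apply/has_arrowP; exists x, y.
have only_coherent (b c : bool) : has_arrow k a b c -> coherent (k x) (k y) b c.
  by case/has_arrowP => x' [y' [axy' <- <-]]; apply: ka axy axy'.
rewrite /colour_quot.
case E1: (has_arrow k a false true).
  by move: (only_coherent _ _ E1); rewrite /coherent; case: (k x) (k y) => [] [].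
case E2: (has_arrow k a true false).
  by move: (only_coherent _ _ E2); rewrite /coherent; case: (k x) (k y) => [] [].
case E3: (has_arrow k a false false); case E4: (has_arrow k a true true);
  by move: kxy; case: (k x) (k y) => [] [] //=; rewrite ?E1 ?E2 ?E3 ?E4.
Qed.

Lemma colour_quot_arrow k a (b c : bool) :
  B21_act (colour_quot k a) b = Some c -> has_arrow k a b c.
Proof.
rewrite /colour_quot.
case E1: (has_arrow k a false true); case E2: (has_arrow k a true false);
case E3: (has_arrow k a false false); case E4: (has_arrow k a true true);
by case: b; case: c.
Qed.

Definition descends k a :=
  exists b, forall x y, a x = Some y -> B21_act b (k x) = Some (k y).

Lemma respects_descends k a : respects k a -> descends k a.
Proof. by move=> ka; exists (colour_quot k a) => x y; apply: colour_quotP. Qed.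

Lemma descends_respects k a : descends k a -> respects k a.
Proof.
move=> [b kb] x x' y y' /kb + /kb; clear kb; rewrite /coherent.
case: b => [||i j] /=; first by move=> [->] [->]; rewrite !eqxx.
  by [].
by do 2![case: eqP => // -> [<-]]; rewrite !eqxx orbT.
Qed.

Lemma descends_pmul k a b : descends k a -> descends k b -> descends k (pmul a b).
Proof.
move=> [ba kba] [bb kbb]; exists (B21_mul ba bb) => x y.
by rewrite pmulE B21_act_mul; case ax: (a x) => [u|] //= /kbb; rewrite (kba _ _ ax).
Qed.

Lemma descends_pinv k a : descends k a -> descends k (pinv a).
Proof. by move=> [b kb]; exists (B21_inv b) => x y /pinv_Some /kb /B21_act_inv. Qed.

End Colourings.

Section IdentityTransfer.
Variables (n : nat) (w : nat -> pinj n).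
Implicit Types (kap : 'I_(N3 n) -> bool) (t : term).

Definition respects_all kap := forall k, respects kap (w k).

Hypothesis w_inj : forall k, pinjective (w k).
Hypothesis separates_points : forall q q', q <> q' ->
  exists2 kap, respects_all kap & kap q <> kap q'.
Hypothesis separates_undefined : forall k p, w k p = None ->
  exists2 kap, respects_all kap & forall x y, w k x = Some y -> kap x <> kap p.
Hypothesis separates_unreached : forall k p, (forall x, w k x <> Some p) ->
  exists2 kap, respects_all kap & forall x y, w k x = Some y -> kap y <> kap p.

Notation ev := (teval (@pmul n) (@pinv n) w).
Notation ev_quot kap := (teval B21_mul B21_inv (fun k => colour_quot kap (w k))).

Lemma ev_pinjective t : pinjective (ev t).
Proof. by elim: t => [k | s ? u ? | s ?] /=; [exact: w_inj | exact: pinjective_pmul | exact: pinjective_pinv]. Qed.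

Lemma ev_quotP kap t x y : respects_all kap -> ev t x = Some y ->
  B21_act (ev_quot kap t) (kap x) = Some (kap y).
Proof.
move=> kw; elim: t x y => [k | s IHs u IHu | s IHs] x y /=.
- exact: colour_quotP.
- by rewrite pmulE B21_act_mul; case sx: (ev s x) => [z|] //= /IHu; rewrite (IHs _ _ sx).
- by move=> /pinv_Some /IHs /B21_act_inv.
Qed.

Lemma ev_quot_undefined t :
  (forall x, ev t x = None ->
     exists2 kap, respects_all kap & B21_act (ev_quot kap t) (kap x) = None) /\
  (forall y, (forall x, ev t x <> Some y) ->
     exists2 kap, respects_all kap & forall c, B21_act (ev_quot kap t) c <> Some (kap y)).
Proof.
elim: t => [k | s [IHs1 IHs2] u [IHu1 IHu2] | s [IHs1 IHs2]] /=; split.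
- move=> p /separates_undefined [kap kw kp]; exists kap => //.
  case E: B21_act => [c|] //; have /has_arrowP [x [y [wxy kx _]]] := colour_quot_arrow E.
  by case: (kp _ _ wxy).
- move=> p /separates_unreached [kap kw kp]; exists kap => // c E.
  have /has_arrowP [x [y [wxy _ ky]]] := colour_quot_arrow E.
  by case: (kp _ _ wxy).
- move=> x; rewrite pmulE; case sx: (ev s x) => [z|] /= uz.
    have [kap kw kz] := IHu1 _ uz; exists kap => //.
    by rewrite B21_act_mul (ev_quotP kw sx).
  have [kap kw kx] := IHs1 _ sx; exists kap => //.
  by rewrite B21_act_mul kx.
- move=> y unreached; case: (pickP (fun z => ev u z == Some y)) => [z /eqP uz | none].
    have [kap kw kz] : exists2 kap, respects_all kap &
        forall c, B21_act (ev_quot kap s) c <> Some (kap z).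
      by apply: IHs2 => x sx; apply: (unreached x); rewrite pmulE sx.
    exists kap => // c; rewrite B21_act_mul.
    case E: (B21_act _ c) => [c'|] //= E'.
    by rewrite (B21_act_inj E' (ev_quotP kw uz)) in E; apply: kz E.
  have [kap kw ky] : exists2 kap, respects_all kap &
      forall c, B21_act (ev_quot kap u) c <> Some (kap y).
    by apply: IHu2 => x ux; move: (none x); rewrite ux eqxx.
  by exists kap => // c; rewrite B21_act_mul; case: (B21_act _ c).
- move=> x /pinv_None /IHs2 [kap kw kx]; exists kap => //.
  by case E: B21_act => [c|] //; move/B21_act_inv: E => /kx.
- move=> y unreached.
  have sy : ev s y = None.
    by case E: (ev s y) => [z|] //; case: (unreached z (pinvP (@ev_pinjective s) E)).
  have [kap kw ky] := IHs1 _ sy; exists kap => // c /B21_act_inv.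
  by rewrite ky.
Qed.

Lemma ev_sub_of_identity s t : satisfies B21_mul B21_inv s t ->
  forall x y, ev s x = Some y -> ev t x = Some y.
Proof.
move=> st x y sxy; have qs kap := st (fun k => colour_quot kap (w k)).
case tx: (ev t x) => [y'|].
  case: (y =P y') => [-> // | yy'].
  have [kap kw kyy'] := separates_points yy'.
  by move: (ev_quotP kw sxy); rewrite qs (ev_quotP kw tx) => -[/esym].
have [kap kw kx] := (ev_quot_undefined t).1 _ tx.
by move: (ev_quotP kw sxy); rewrite qs kx.
Qed.

Lemma ev_identity s t : satisfies B21_mul B21_inv s t -> ev s = ev t.
Proof.
move=> st; have ts : satisfies B21_mul B21_inv t s by move=> v; rewrite st.
apply/ffunP => x; case sx: (ev s x) => [y|]; first by rewrite (ev_sub_of_identity st sx).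
by case tx: (ev t x) => [y|] //; rewrite (ev_sub_of_identity ts tx) in sx.
Qed.

End IdentityTransfer.

Section Shape.
Variable n : nat.
Hypothesis n_ge2 : 2 <= n.
Notation N := (N3 n).
Implicit Types (a : pinj n) (m : 'I_N).

Lemma N3E : N = 3 * n + 3. Proof. by []. Qed.

(* Reversing the middle block {n+1, ..., 2n+1} turns each generator into a
   restriction of the shift m |-> m + 1. *)
Definition flip (p : nat) : nat :=
  if p <= n then p else if p <= 2 * n + 1 then 3 * n + 2 - p else p.

Lemma flip_cases p :
  [\/ p <= n /\ flip p = p, n < p <= 2 * n + 1 /\ flip p = 3 * n + 2 - p
    | 2 * n + 1 < p /\ flip p = p].
Proof. by rewrite /flip; case: ifP => ?; [|case: ifP => ?]; [apply: Or31|apply: Or32|apply: Or33]; lia. Qed.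

Lemma flip_lo p : p <= n -> flip p = p.
Proof. by case: (flip_cases p); lia. Qed.

Lemma flip_mid p : n < p -> p <= 2 * n + 1 -> flip p = 3 * n + 2 - p.
Proof. by case: (flip_cases p); lia. Qed.

Lemma flip_hi p : 2 * n + 1 < p -> flip p = p.
Proof. by case: (flip_cases p); lia. Qed.

Lemma flip_lt p : p < N -> flip p < N.
Proof. by rewrite N3E; case: (flip_cases p); lia. Qed.

Lemma flipK p : p < N -> flip (flip p) = p.
Proof. by rewrite N3E => ?; case: (flip_cases p); case: (flip_cases (flip p)); lia. Qed.

Lemma flip_ord_lt m : flip m < 3 * n + 3.
Proof. exact: flip_lt (ltn_ord m). Qed.

Lemma flip_ord_inj m m' : m <> m' -> flip m <> flip m'.
Proof. by move=> mm' /(congr1 flip); rewrite !flipK //; move/val_inj. Qed.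

Ltac flip_rewrite := repeat match goal with |- context [flip ?x] =>
  first [ rewrite (@flip_lo x); [|lia] | rewrite (@flip_mid x); [|lia|lia]
        | rewrite (@flip_hi x); [|lia] ] end.

(* The possible configurations of two distinct arrows [P |-> Q] and [P' |-> Q']
   of one element of S_n, in flipped coordinates; [coarrows0] lists them up to
   exchanging the two arrows. *)
Definition coarrows0 (P Q P' : nat) : Prop :=
     (P <= n /\ P' = P + (2 * n + 2) /\ Q <= n)
  \/ (n + 1 <= P <= 2 * n /\ (P' + P = 2 * n \/ P' + P = 4 * n + 2) /\ (Q = P \/ Q = P + 1))
  \/ (n + 2 <= P <= 2 * n + 1 /\ (P' + P = 2 * n + 2 \/ P' + P = 4 * n + 4) /\ (Q = P \/ Q + 1 = P))
  \/ (P = 2 * n + 1 /\ P' = n /\ (Q = P \/ Q = P + 1))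
  \/ (P = n + 1 /\ P' = 2 * n + 2 /\ (Q = P \/ Q + 1 = P)).

Definition coarrows (P Q P' Q' : nat) : Prop :=
  Q + P' = Q' + P /\ (coarrows0 P Q P' \/ coarrows0 P' Q' P).

Ltac destruct_all := repeat match goal with
  | H : _ \/ _ |- _ => destruct H | H : _ /\ _ |- _ => destruct H
  | H : or3 _ _ _ |- _ => destruct H end.

Ltac solve_coarrows0 := first
  [ left; lia | right; first [ left; lia | right; first [ left; lia | right; first [left; lia | right; lia]]]].

Ltac solve_coarrows := first
  [ exfalso; lia | split; [lia | first [left; solve_coarrows0 | right; solve_coarrows0]]].

Lemma coarrows_inv P Q P' Q' : coarrows P Q P' Q' -> coarrows Q P Q' P'.
Proof. rewrite /coarrows /coarrows0 => -[E H]; destruct_all; solve_coarrows. Qed.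

Lemma coarrows_comp P Q P' Q' S S' : P <> P' ->
  coarrows P Q P' Q' -> coarrows Q S Q' S' -> coarrows P S P' S'.
Proof. rewrite /coarrows /coarrows0 => PP' [E1 H1] [E2 H2]; destruct_all; solve_coarrows. Qed.

Definition shaped a := forall m m' y y', a m = Some y -> a m' = Some y' -> m <> m' ->
  coarrows (flip m) (flip y) (flip m') (flip y').

Lemma shaped_pinjective a : shaped a -> pinjective a.
Proof.
move=> sa m m' y ay ay'; case: (m =P m') => // mm'.
have [E _] := sa _ _ _ _ ay ay' mm'.
by case: (flip_ord_inj mm'); lia.
Qed.

Lemma shaped_pmul a b : shaped a -> shaped b -> shaped (pmul a b).
Proof.
move=> sa sb m m' s s'; rewrite !pmulE.
case am: (a m) => [q|] //=; case am': (a m') => [q'|] //= bq bq' mm'.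
have qq' : q <> q' by move=> E; subst q'; apply: mm'; apply: (shaped_pinjective sa am am').
exact: coarrows_comp (flip_ord_inj mm') (sa _ _ _ _ am am' mm') (sb _ _ _ _ bq bq' qq').
Qed.

Lemma shaped_pinv a : shaped a -> shaped (pinv a).
Proof.
move=> sa y y' m m' /pinv_Some am /pinv_Some am' yy'.
have mm' : m <> m' by move=> E; subst m'; apply: yy'; rewrite am in am'; case: am'.
exact: coarrows_inv (sa _ _ _ _ am am' mm').
Qed.

Lemma pmap_ofE f m y : pmap_of n f m = Some y -> f m = Some (nat_of_ord y).
Proof. by rewrite ffunE; case: (f m) => //= v; case: insubP => // u _ <- [<-]. Qed.

Lemma chii_arrows i m y : chii n i m = Some y ->
  [\/ nat_of_ord m = i - 1 /\ nat_of_ord y = i,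
      nat_of_ord m = n + 1 + i /\ nat_of_ord y = n + i
    | nat_of_ord m = 2 * n + 1 + i /\ nat_of_ord y = 2 * n + 2 + i].
Proof.
move/pmap_ofE; rewrite /chii_fun.
case: eqP => [-> [<-]|_]; first by apply: Or31; rewrite subn1.
case: eqP => [-> [<-]|_]; first exact: Or32.
by case: eqP => [-> [<-]|_] //; apply: Or33.
Qed.

Lemma chi_arrows m y : chi n m = Some y ->
  (nat_of_ord m = n /\ nat_of_ord y = 2 * n + 1) \/
  (nat_of_ord m = n + 1 /\ nat_of_ord y = 2 * n + 2).
Proof.
move/pmap_ofE; rewrite /chi_fun.
case: eqP => [-> [<-]|_]; first by left.
by case: eqP => [-> [<-]|_] //; right; rewrite addn1.
Qed.

Lemma shaped_chii i : 1 <= i <= n -> shaped (chii n i).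
Proof.
move=> i_range m m' y y' /chii_arrows + /chii_arrows + mm'.
have /eqP : nat_of_ord m != m' by apply: contra_not_neq mm'; apply: val_inj.
have := ltn_ord m; have := ltn_ord m'.
move: (nat_of_ord m) (nat_of_ord m') (nat_of_ord y) (nat_of_ord y') => p p' q q'.
rewrite N3E => *.
destruct_all; subst; flip_rewrite; rewrite /coarrows /coarrows0; solve_coarrows.
Qed.

Lemma shaped_chi : shaped (chi n).
Proof.
move=> m m' y y' /chi_arrows + /chi_arrows + mm'.
have /eqP : nat_of_ord m != m' by apply: contra_not_neq mm'; apply: val_inj.
move: (nat_of_ord m) (nat_of_ord m') (nat_of_ord y) (nat_of_ord y') => p p' q q' *.
destruct_all; subst; flip_rewrite; rewrite /coarrows /coarrows0; solve_coarrows.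
Qed.

Lemma shaped_Sn a : in_Sn a -> shaped a.
Proof.
elim=> [x [->|[i [i_range ->]]] | x z _ sx _ sz | x _ sx].
- exact: shaped_chi.
- exact: shaped_chii.
- exact: shaped_pmul.
- exact: shaped_pinv.
Qed.

(* [tag_step c] recognises, in either direction, the arrow of chi_c inside the
   middle block when [c >= 1], and the two arrows of chi when [c = 0]. *)
Definition tag_step (c P Q : nat) : bool :=
  if c == 0 then
    [|| (P == n) && (Q == n + 1), (P == n + 1) && (Q == n),
        (P == 2 * n + 1) && (Q == 2 * n + 2) | (P == 2 * n + 2) && (Q == 2 * n + 1)]
  else
    (P == 2 * n + 1 - c) && (Q == 2 * n + 2 - c) || (P == 2 * n + 2 - c) && (Q == 2 * n + 1 - c).

Lemma tag_step_mid c : 1 <= c <= n ->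
  tag_step c (2 * n + 1 - c) (2 * n + 2 - c) && tag_step c (2 * n + 2 - c) (2 * n + 1 - c).
Proof. by move=> ?; rewrite /tag_step (_ : (c == 0) = false); lia. Qed.

Lemma tag_step_chi : tag_step 0 (2 * n + 1) (2 * n + 2) && tag_step 0 (n + 1) n.
Proof. by rewrite /tag_step eqxx; lia. Qed.

Definition uses a c := [exists m, if a m is Some y then tag_step c (flip m) (flip y) else false].

Lemma usesP a c : reflect (exists m y, a m = Some y /\ tag_step c (flip m) (flip y)) (uses a c).
Proof.
apply: (iffP existsP) => [[m] | [m [y [am ?]]]]; last by exists m; rewrite am.
by case am: (a m) => [y|] // ?; exists m, y.
Qed.

Lemma tag_step_unique c1 c2 P Q P' Q' : c1 <= n -> c2 <= n ->
  tag_step c1 P Q -> tag_step c2 P' Q' ->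
  (P = P' /\ Q = Q') \/ (P <> P' /\ coarrows P Q P' Q') -> c1 = c2.
Proof.
rewrite /tag_step /coarrows /coarrows0 => ? ?.
case: (c1 =P 0) => ?; case: (c2 =P 0) => ? /= t1 t2 H;
repeat match goal with
  | H : is_true (_ || _) |- _ => case/orP: H => H
  | H : is_true (_ && _) |- _ => case/andP: H => /eqP ? /eqP ?
  end; subst; lia.
Qed.

Lemma uses_unique a c1 c2 : shaped a -> c1 <= n -> c2 <= n -> uses a c1 -> uses a c2 -> c1 = c2.
Proof.
move=> sa c1n c2n /usesP [m [y [am t1]]] /usesP [m' [y' [am' t2]]].
apply: tag_step_unique c1n c2n t1 t2 _.
case: (m =P m') => [E | mm']; last by right; split; [apply: flip_ord_inj | apply: sa].
by left; subst m'; move: am'; rewrite am => -[->].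
Qed.

Section Generated.
Variable X : seq (pinj n).
Hypothesis X_Sn : forall x, x \in X -> in_Sn x.
Hypothesis size_X : size X < n.

Lemma shaped_gen a : gen_seq X a -> shaped a.
Proof.
elim=> [x /X_Sn /shaped_Sn // | x z _ sx _ sz | x _ sx].
- exact: shaped_pmul.
- exact: shaped_pinv.
Qed.

Definition tag_of a : option nat := omap val [pick c : 'I_n.+1 | uses a c].

Definition used : seq nat := pmap tag_of X.

Lemma mem_used x c : x \in X -> c <= n -> uses x c -> c \in used.
Proof.
move=> xX cn xc; rewrite mem_pmap; apply/mapP; exists x => //.
rewrite /tag_of; case: pickP => [c' xc' | none] /=.
  by congr Some; apply: uses_unique (shaped_Sn (X_Sn xX)) cn (ltn_ord c') xc xc'.
by have := none (Ordinal (cn : c < n.+1)); rewrite /= xc.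
Qed.

Lemma size_used : size used < n.
Proof. by rewrite size_pmap; apply: leq_ltn_trans size_X; apply: count_size. Qed.

Lemma exists_unused (L : seq nat) : uniq L -> size L = n -> exists2 j, j \in L & j \notin used.
Proof.
move=> uL sL; case: (boolP (all (mem used) L)) => [/allP Lused | /allPn [j]]; last by exists j.
by have := uniq_leq_size uL Lused; rewrite sL leqNgt size_used.
Qed.

Lemma unused_step : exists2 j, 1 <= j <= n & j \notin used.
Proof.
have [j] := exists_unused (iota_uniq 1 n) (size_iota 1 n).
by rewrite mem_iota => j_range; exists j => //; lia.
Qed.

Lemma unused_step_lt : 0 \in used -> exists2 j, 1 <= j <= n - 1 & j \notin used.
Proof.
move=> used0; have u : uniq (0 :: iota 1 (n - 1)) by rewrite /= iota_uniq mem_iota; lia.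
have [|j] := exists_unused u; first by rewrite /= size_iota; lia.
rewrite inE mem_iota => /orP [/eqP -> | j_range]; first by rewrite used0.
by exists j => //; lia.
Qed.

Lemma unused_step_gt : 0 \in used -> exists2 j, 2 <= j <= n & j \notin used.
Proof.
move=> used0; have u : uniq (0 :: iota 2 (n - 1)) by rewrite /= iota_uniq mem_iota; lia.
have [|j] := exists_unused u; first by rewrite /= size_iota; lia.
rewrite inE mem_iota => /orP [/eqP -> | j_range]; first by rewrite used0.
by exists j => //; lia.
Qed.

Definition adjacent V rho := V <= n /\ rho <= n /\
  (V + 1 = rho \/ rho + 1 = V \/ (V = n /\ rho = 0) \/ (V = 0 /\ rho = n)).

(* The lower point [V], the upper point of the same index and the middle
   point of index [rho]. *)
Definition in_triple V rho P := P = V \/ P = V + (2 * n + 2) \/ P = 2 * n + 1 - rho.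

Definition in_mid (P : nat) : bool := n < P <= 2 * n + 1.

Definition outer_index (P : nat) : nat := if P <= n then P else P - (2 * n + 2).

Lemma coarrows_outer P Q P' Q' : coarrows P Q P' Q' -> P <> P' -> P < 3 * n + 3 ->
  ~~ in_mid P -> ~~ in_mid P' -> P' = outer_index P \/ P' = outer_index P + (2 * n + 2).
Proof. rewrite /coarrows /coarrows0 /in_mid /outer_index => H *; case: ifP; destruct_all; lia. Qed.

Lemma coarrows_mid_mid P Q P' Q' : coarrows P Q P' Q' -> P <> P' ->
  in_mid P -> in_mid P' -> False.
Proof. rewrite /coarrows /coarrows0 /in_mid => H *; destruct_all; lia. Qed.

Lemma coarrows_mid_outer P Q P' Q' : coarrows P Q P' Q' -> P <> P' -> P' < 3 * n + 3 ->
  in_mid P -> ~~ in_mid P' -> adjacent (outer_index P') (2 * n + 1 - P).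
Proof. rewrite /coarrows /coarrows0 /in_mid /outer_index /adjacent => H *; case: ifP; destruct_all; lia. Qed.

Definition triple_dom a := exists V rho,
  adjacent V rho /\ forall m y, a m = Some y -> in_triple V rho (flip m).

Section Triple.
Variable a : pinj n.
Hypothesis sa : shaped a.

Lemma shaped_apart m m' y y' : a m = Some y -> a m' = Some y' -> m <> m' ->
  coarrows (flip m) (flip y) (flip m') (flip y') /\ flip m <> flip m'.
Proof. by move=> am am' mm'; split; [apply: sa | apply: flip_ord_inj]. Qed.

Lemma mid_arrow_unique m m' y y' : a m = Some y -> a m' = Some y' ->
  in_mid (flip m) -> in_mid (flip m') -> m = m'.
Proof.
move=> am am' mid mid'; case: (m =P m') => // mm'.
by have [co ne] := shaped_apart am am' mm'; case: (coarrows_mid_mid co ne mid mid').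
Qed.

Lemma outer_arrows m m' y y' : a m = Some y -> a m' = Some y' ->
  ~~ in_mid (flip m) -> ~~ in_mid (flip m') ->
  flip m' = outer_index (flip m) \/ flip m' = outer_index (flip m) + (2 * n + 2).
Proof.
move=> am am' out out'; case: (m =P m') => [<- | mm'].
  by move: out (flip_ord_lt m); rewrite /in_mid /outer_index; case: ifP; lia.
have [co ne] := shaped_apart am am' mm'.
exact: coarrows_outer co ne (flip_ord_lt m) out out'.
Qed.

Lemma mid_outer_adjacent m m' y y' : a m = Some y -> a m' = Some y' ->
  in_mid (flip m) -> ~~ in_mid (flip m') -> adjacent (outer_index (flip m')) (2 * n + 1 - flip m).
Proof.
move=> am am' mid out'; have mm' : m <> m' by move=> E; rewrite E (negbTE out') in mid.
have [co ne] := shaped_apart am am' mm'.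
exact: coarrows_mid_outer co ne (flip_ord_lt m') mid out'.
Qed.

Lemma shaped_triple_dom : triple_dom a.
Proof.
have mid_val m : in_mid (flip m) -> flip m = 2 * n + 1 - (2 * n + 1 - flip m).
  by rewrite /in_mid; lia.
case: (pickP (fun m => (a m != None) && in_mid (flip m))) => [mM /andP [] | no_mid].
  case amM: (a mM) => [yM|] // _ midM.
  case: (pickP (fun m => (a m != None) && ~~ in_mid (flip m))) => [mO /andP [] | no_out].
    case amO: (a mO) => [yO|] // _ outO.
    exists (outer_index (flip mO)), (2 * n + 1 - flip mM).
    split; first exact: mid_outer_adjacent amM amO midM outO.
    move=> m y am; case: (boolP (in_mid (flip m))) => [mid | out].
      by rewrite (mid_arrow_unique am amM mid midM); right; right; apply: mid_val.
    by case: (outer_arrows amO am outO out); [left | right; left].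
  have only_mM m y : a m = Some y -> m = mM.
    move=> am; have mid : in_mid (flip m) by move: (no_out m); rewrite am /=; case: in_mid.
    exact: mid_arrow_unique am amM mid midM.
  exists (if 2 * n + 1 - flip mM == 0 then 1 else 2 * n + 1 - flip mM - 1), (2 * n + 1 - flip mM).
  split; first by move: midM; rewrite /in_mid /adjacent; case: eqP; lia.
  by move=> m y /only_mM ->; right; right; apply: mid_val.
case: (pickP (fun m => a m != None)) => [mO | no_arrow]; last first.
  by exists 0, 1; split=> [|m y am]; [rewrite /adjacent; lia | move: (no_arrow m); rewrite am].
case amO: (a mO) => [yO|] // _.
have out m y : a m = Some y -> ~~ in_mid (flip m) by move=> am; move: (no_mid m); rewrite am /= => ->.
set V := outer_index (flip mO).
exists V, (if V < n then V + 1 else V - 1); split.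
  by move: (out _ _ amO) (flip_ord_lt mO); rewrite /V /in_mid /outer_index /adjacent; case: ifP; case: ifP; lia.
move=> m y am; have [|] := outer_arrows amO am (out _ _ amO) (out _ _ am); first by left.
by right; left.
Qed.

End Triple.

Lemma triple_cover P : P < 3 * n + 3 -> exists V rho, adjacent V rho /\ in_triple V rho P.
Proof.
rewrite /adjacent /in_triple => P_lt.
case: (leqP P n) => [P_lo | P_gt].
  case: (ltnP P n) => ?; [exists P, (P + 1) | exists P, (P - 1)]; lia.
case: (leqP P (2 * n + 1)) => [P_mid | P_hi].
  case: (ltnP P (2 * n + 1)) => ?; [exists (2 * n - P), (2 * n + 1 - P) | exists 1, 0]; lia.
case: (ltnP (P - (2 * n + 2)) n) => ?;
  [exists (P - (2 * n + 2)), (P - (2 * n + 1)) | exists n, (n - 1)]; lia.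
Qed.

Section Paint.
Variables f0 g f2 : nat -> bool.

(* The lower block is coloured by [f0], the upper block by [f2] (both indexed
   from 0), and the middle block by [g], indexed by [2n+1 - P] so that chi_c
   moves the middle point of index [c] to the one of index [c - 1]. *)
Definition paint (P : nat) : bool :=
  if P <= n then f0 P else if P <= 2 * n + 1 then g (2 * n + 1 - P) else f2 (P - (2 * n + 2)).

Lemma paint_lo P : P <= n -> paint P = f0 P.
Proof. by rewrite /paint => ->. Qed.

Lemma paint_mid P : n < P -> P <= 2 * n + 1 -> paint P = g (2 * n + 1 - P).
Proof. by move=> ? ?; rewrite /paint ifF ?ifT //; lia. Qed.

Lemma paint_hi P : 2 * n + 1 < P -> paint P = f2 (P - (2 * n + 2)).
Proof. by move=> ?; rewrite /paint ifF ?ifF //; lia. Qed.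

Ltac paint_rewrite := repeat match goal with |- context [paint ?x] =>
  first [ rewrite (@paint_lo x); [|lia] | rewrite (@paint_mid x); [|lia|lia]
        | rewrite (@paint_hi x); [|lia] ] end.

Definition outer_coherent :=
  forall v w, v <= n -> w <= n -> coherent (f0 v) (f0 w) (f2 v) (f2 w).

Definition step_coherent c :=
  if c == 0 then coherent (g 0) (f2 0) (f0 n) (g n)
  else coherent (g c) (g (c - 1)) (f0 (c - 1)) (f0 c) &&
       coherent (g c) (g (c - 1)) (f2 (c - 1)) (f2 c).

Lemma coherent_paint_outer v w : v <= n -> w <= n -> outer_coherent ->
  coherent (paint v) (paint w) (paint (v + (2 * n + 2))) (paint (w + (2 * n + 2))).
Proof. by move=> vn wn oc; paint_rewrite; rewrite !addnK; apply: oc. Qed.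

Lemma coherent_paint_step c P' : 1 <= c <= n -> step_coherent c ->
  P' = c - 1 \/ P' = 2 * n + 1 + c ->
  coherent (paint (2 * n + 1 - c)) (paint (2 * n + 2 - c)) (paint P') (paint (P' + 1)).
Proof.
rewrite /step_coherent => c_range; rewrite ifF; last by lia.
have mid_c : 2 * n + 1 - (2 * n + 1 - c) = c by lia.
have mid_c1 : 2 * n + 1 - (2 * n + 2 - c) = c - 1 by lia.
case/andP=> lo hi [->|->]; paint_rewrite; rewrite mid_c mid_c1.
  by have -> : c - 1 + 1 = c by lia.
have -> : 2 * n + 1 + c - (2 * n + 2) = c - 1 by lia.
by have -> : 2 * n + 1 + c + 1 - (2 * n + 2) = c by lia.
Qed.

Lemma coherent_paint_chi : step_coherent 0 ->
  coherent (paint (2 * n + 1)) (paint (2 * n + 2)) (paint n) (paint (n + 1)).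
Proof.
rewrite /step_coherent /= => chi_ok; paint_rewrite.
by rewrite !subnn (_ : 2 * n + 1 - (n + 1) = n); last lia.
Qed.

Lemma coherent_paint0 P Q P' Q' : Q + P' = Q' + P -> coarrows0 P Q P' -> outer_coherent ->
  (forall c, c <= n -> tag_step c P Q -> step_coherent c) ->
  coherent (paint P) (paint Q) (paint P') (paint Q').
Proof.
move=> E H oc sc.
have stay : Q = P -> coherent (paint P) (paint Q) (paint P') (paint Q').
  by move=> QP; rewrite QP (_ : Q' = P') ?coherent_diag; last lia.
case: H => [[Plo [P'E Qlo]] | [[Prange [P'E [/stay // | QE]]] | [[Prange [P'E [/stay // | QE]]] |
           [[PE [P'E [/stay // | QE]]] | [PE [P'E [/stay // | QE]]]]]]].
- subst P'; rewrite (_ : Q' = Q + (2 * n + 2)); last lia.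
  exact: coherent_paint_outer.
- have [c c_range PE] : exists2 c, 1 <= c <= n & P = 2 * n + 1 - c by exists (2 * n + 1 - P); lia.
  have QE' : Q = 2 * n + 2 - c by lia.
  have Q'E : Q' = P' + 1 by lia.
  rewrite PE QE' Q'E in sc *.
  apply: coherent_paint_step; [lia | | lia].
  by apply: sc; [lia | case/andP: (tag_step_mid c_range) => ->].
- have [c c_range PE] : exists2 c, 1 <= c <= n & P = 2 * n + 2 - c by exists (2 * n + 2 - P); lia.
  have [P'' P''E] : exists P'', P' = P'' + 1 by exists (P' - 1); lia.
  have QE' : Q = 2 * n + 1 - c by lia.
  have Q'E : Q' = P'' by lia.
  rewrite PE P''E QE' Q'E in sc *.
  rewrite coherent_rev; apply: coherent_paint_step; [lia | | lia].
  by apply: sc; [lia | case/andP: (tag_step_mid c_range) => _ ->].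
- have QE' : Q = 2 * n + 2 by lia.
  have Q'E : Q' = n + 1 by lia.
  rewrite PE P'E QE' Q'E in sc *.
  by apply: coherent_paint_chi; apply: sc => //; case/andP: tag_step_chi => ->.
- have QE' : Q = n by lia.
  have Q'E : Q' = 2 * n + 1 by lia.
  rewrite PE P'E QE' Q'E in sc *.
  rewrite coherent_sym coherent_rev; apply: coherent_paint_chi.
  by apply: sc => //; case/andP: tag_step_chi => _ ->.
Qed.

Lemma coherent_paint P Q P' Q' : coarrows P Q P' Q' -> outer_coherent ->
  (forall c, c <= n -> tag_step c P Q || tag_step c P' Q' -> step_coherent c) ->
  coherent (paint P) (paint Q) (paint P') (paint Q').
Proof.
move=> [E [H|H]] oc sc.
  by apply: coherent_paint0 E H oc _ => c cn tc; apply: sc; rewrite ?tc.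
rewrite coherent_sym; apply: coherent_paint0 _ H oc _; first lia.
by move=> c cn tc; apply: sc; rewrite ?tc ?orbT.
Qed.

Definition admissible := outer_coherent /\ forall c, c \in used -> step_coherent c.

Definition painted (m : 'I_N) : bool := paint (flip m).

Lemma respects_painted x : x \in X -> admissible -> respects painted x.
Proof.
move=> xX [oc sc] m m' y y' xm xm'.
case: (m =P m') => [E | mm']; first by subst m'; move: xm'; rewrite xm => -[<-]; apply: coherent_refl.
apply: coherent_paint (shaped_Sn (X_Sn xX) xm xm' mm') oc _ => c cn /orP tc.
apply/sc/(mem_used xX cn)/usesP.
by case: tc => tc; [exists m, y | exists m', y'].
Qed.

Lemma descends_painted a : admissible -> gen_seq X a -> descends painted a.
Proof.
move=> adm; elim=> [x xX | x z _ dx _ dz | x _ dx].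
- exact/respects_descends/respects_painted.
- exact: descends_pmul.
- exact: descends_pinv.
Qed.

Section Separation.
Variables (V rho A : nat).
Hypothesis adj : adjacent V rho.

Definition separates := forall B, in_triple V rho B -> B <> A -> paint B != paint A.

Lemma paint_triple B : in_triple V rho B ->
  [\/ B = V /\ paint B = f0 V, B = V + (2 * n + 2) /\ paint B = f2 V
    | B = 2 * n + 1 - rho /\ paint B = g rho].
Proof.
case: adj => Vn [rhon _] [-> | [-> | ->]]; [apply: Or31 | apply: Or32 | apply: Or33];
  split=> //; paint_rewrite; congr (_ _); lia.
Qed.

Lemma separates_lo : A <= n ->
  (A <> V -> f0 V != f0 A) -> f2 V != f0 A -> g rho != f0 A -> separates.
Proof.
move=> An sV sV' srho B /paint_triple [] [-> ->] BA; rewrite paint_lo //.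
by apply: sV => /esym.
Qed.

Lemma separates_mid : n < A <= 2 * n + 1 ->
  f0 V != g (2 * n + 1 - A) -> f2 V != g (2 * n + 1 - A) ->
  (2 * n + 1 - A <> rho -> g rho != g (2 * n + 1 - A)) -> separates.
Proof.
move=> A_range sV sV' srho; have pA : paint A = g (2 * n + 1 - A) by apply: paint_mid; lia.
move=> B /paint_triple [] [-> ->] BA; rewrite pA //.
by apply: srho; lia.
Qed.

Lemma separates_hi : 2 * n + 1 < A ->
  f0 V != f2 (A - (2 * n + 2)) -> (A - (2 * n + 2) <> V -> f2 V != f2 (A - (2 * n + 2))) ->
  g rho != f2 (A - (2 * n + 2)) -> separates.
Proof.
move=> A_hi sV sV' srho B /paint_triple [] [-> ->] BA; rewrite paint_hi //.
by apply: sV'; lia.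
Qed.

End Separation.
End Paint.

Lemma admissible_mirror f : (f 0 != f n) || (0 \notin used) ->
  admissible f (fun r => ~~ f r) f.
Proof.
move=> f0n; split=> [v w _ _ | c cu]; first exact: coherent_refl.
rewrite /step_coherent; case: (c =P 0) => [c0 | _] /=.
  by subst c; move: f0n; rewrite cu /= orbF /coherent; case: (f 0); case: (f n).
by rewrite andbb /coherent; case: (f c); case: (f (c - 1)).
Qed.

Lemma admissible_threshold j : j \notin used ->
  admissible (fun r => j <= r) (fun r => j <= r) (fun r => j <= r).
Proof.
move=> ju; split=> [v w _ _ | c cu]; first exact: coherent_refl.
rewrite /step_coherent; case: (c =P 0) => [_ | c0] /=; first exact: coherent_diag.
have cj : c != j by apply: contraNneq ju => <-.
by rewrite (_ : (j <= c) = (j <= c - 1)) ?coherent_diag //; apply/idP/idP; lia.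
Qed.

Lemma admissible_split j b e : 1 <= j <= n -> j \notin used ->
  admissible (fun _ => b) (fun r => (j <= r) (+) e) (fun _ => ~~ b).
Proof.
move=> j_range ju; split=> [v w _ _ | c cu]; first exact: coherent_diag.
rewrite /step_coherent; case: (c =P 0) => [_ | c0] /=.
  have -> : (j <= 0) = false by lia.
  have -> : (j <= n) = true by lia.
  by rewrite /coherent; case: b; case: e.
have cj : c != j by apply: contraNneq ju => <-.
by rewrite (_ : (j <= c) = (j <= c - 1)) ?coherent_diag //; apply/idP/idP; lia.
Qed.

Lemma outer_separator V rho w : adjacent V rho -> w <= n -> w <> V ->
  exists f g, admissible f g f /\ f V != f w /\ g rho != f w.
Proof.
move=> [Vn [rhon adj]] wn wV.
case: (boolP (0 \in used)) => used0; last first.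
  by exists (fun r => r != V), (fun r => ~~ (r != V)); split; [apply: admissible_mirror; rewrite used0 orbT | lia].
case: (boolP ((w == 0) && (rho == n))) => [w0 | not_w0].
  have [j j_range ju] := unused_step_lt used0.
  by exists (fun r => j <= r), (fun r => j <= r); split; [apply: admissible_threshold | lia].
case: (boolP ((w == n) && (rho == 0))) => [wn' | not_wn].
  have [j j_range ju] := unused_step_gt used0.
  by exists (fun r => j <= r), (fun r => j <= r); split; [apply: admissible_threshold | lia].
case: (boolP ((V == 0) || (V == n))) => V_end.
  by exists (fun r => r != V), (fun r => ~~ (r != V)); split; [apply: admissible_mirror; lia | lia].
case: (boolP ((w != 0) && (rho != 0))) => w_rho.
  exists (fun r => (r != V) && (r != 0)), (fun r => ~~ ((r != V) && (r != 0))).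
  by split; [apply: admissible_mirror; lia | lia].
exists (fun r => (r != V) && (r != n)), (fun r => ~~ ((r != V) && (r != n))).
by split; [apply: admissible_mirror; lia | lia].
Qed.

Lemma middle_separator V rho s : adjacent V rho -> s <= n ->
  exists f0 g f2, admissible f0 g f2 /\
    [/\ f0 V != g s, f2 V != g s & s <> rho -> g rho != g s].
Proof.
move=> [Vn [rhon adj]] sn.
have mirror f : (f 0 != f n) || (0 \notin used) ->
    f V != ~~ f s -> (s <> rho -> ~~ f rho != ~~ f s) ->
    exists f0 g f2, admissible f0 g f2 /\ [/\ f0 V != g s, f2 V != g s & s <> rho -> g rho != g s].
  by move=> f0n fVs frho; exists f, (fun r => ~~ f r), f; split; [exact: admissible_mirror|].
have threshold j : j \notin used -> (j <= V) != (j <= s) -> (s <> rho -> (j <= rho) != (j <= s)) ->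
    exists f0 g f2, admissible f0 g f2 /\ [/\ f0 V != g s, f2 V != g s & s <> rho -> g rho != g s].
  by move=> ju jVs jrho; exists (fun r => j <= r), (fun r => j <= r), (fun r => j <= r);
    split; [exact: admissible_threshold|].
case: (s =P rho) => s_rho.
  case: (boolP (((V == 0) && (rho == n)) || ((V == n) && (rho == 0)))) => [V_rho_ends | not_ends].
    by have [j j_range ju] := unused_step; apply: (threshold j) => //; lia.
  case: (boolP ((V == 0) || (rho == 0))) => [V_rho_0 | V_rho_pos].
    by apply: (mirror (fun r => r <= 1)) => /=; lia.
  by apply: (mirror (fun r => minn V rho <= r)) => /=; lia.
case: (boolP (((V == 0) && (s == n)) || ((V == n) && (s == 0)))) => [V_s_ends | not_s_ends].
  case: (boolP (0 \in used)) => [used0 | unused0].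
    case: (boolP (V == 0)) => [V0 | V_pos].
      by have [j j_range ju] := unused_step_gt used0; apply: (threshold j) => //; lia.
    by have [j j_range ju] := unused_step_lt used0; apply: (threshold j) => //; lia.
  by apply: (mirror (fun r => (r == V) || (r == s))); rewrite /= ?unused0 ?orbT //; lia.
case: (boolP [|| V == 0, V == n, s == 0 | s == n]) => [ends | inner].
  by apply: (mirror (fun r => (r == V) || (r == s))) => /=; lia.
case: (boolP (rho == 0)) => [rho0 | rho_pos].
  by apply: (mirror (fun r => [|| r == V, r == s | r == n])) => /=; lia.
by apply: (mirror (fun r => [|| r == V, r == s | r == 0])) => /=; lia.
Qed.

Lemma triple_separator V rho A : adjacent V rho -> A < 3 * n + 3 ->
  exists f0 g f2, admissible f0 g f2 /\ separates f0 g f2 V rho A.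
Proof.
move=> adj A_lt; have [Vn [rhon _]] := adj.
case: (leqP A n) => [A_lo | A_gt].
  case: (A =P V) => [AV | AV].
    have [j j_range ju] := unused_step.
    exists (fun _ => true), (fun r => (j <= r) (+) (j <= rho)), (fun _ => ~~ true).
    split; first exact: admissible_split.
    by apply: (separates_lo adj) => //=; rewrite addbb.
  have [f [g [adm [fV grho]]]] := outer_separator adj A_lo AV.
  by exists f, g, f; split; last exact: (separates_lo adj).
case: (leqP A (2 * n + 1)) => [A_mid | A_hi].
  have s_le : 2 * n + 1 - A <= n by lia.
  have [f0 [g [f2 [adm [sV sV' srho]]]]] := middle_separator adj s_le.
  by exists f0, g, f2; split; last (apply: (separates_mid adj); lia).
case: (A - (2 * n + 2) =P V) => [AV | AV].
  have [j j_range ju] := unused_step.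
  exists (fun _ => false), (fun r => (j <= r) (+) (j <= rho)), (fun _ => ~~ false).
  split; first exact: admissible_split.
  by apply: (separates_hi adj) => //=; rewrite addbb.
have u_le : A - (2 * n + 2) <= n by lia.
have [f [g [adm [fV grho]]]] := outer_separator adj u_le AV.
by exists f, g, f; split; last exact: (separates_hi adj).
Qed.

Section Valuation.
Variable w : nat -> pinj n.
Hypothesis w_gen : forall k, gen_seq X (w k).

Lemma respects_all_painted f0 g f2 : admissible f0 g f2 -> respects_all w (painted f0 g f2).
Proof. by move=> adm k; apply/descends_respects/descends_painted. Qed.

Lemma gen_separates_points q q' : q <> q' ->
  exists2 kap, respects_all w kap & kap q <> kap q'.
Proof.
move=> qq'; have [V [rho [adj q_in]]] := triple_cover (flip_ord_lt q).
have [f0 [g [f2 [adm sep]]]] := triple_separator adj (flip_ord_lt q').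
exists (painted f0 g f2); first exact: respects_all_painted.
exact/eqP/(sep _ q_in (flip_ord_inj qq')).
Qed.

Lemma gen_separates_undefined k p : w k p = None ->
  exists2 kap, respects_all w kap & forall x y, w k x = Some y -> kap x <> kap p.
Proof.
move=> wp; have [V [rho [adj dom]]] := shaped_triple_dom (shaped_gen (w_gen k)).
have [f0 [g [f2 [adm sep]]]] := triple_separator adj (flip_ord_lt p).
exists (painted f0 g f2) => [|x y wxy]; first exact: respects_all_painted.
apply/eqP/(sep _ (dom _ _ wxy))/flip_ord_inj => xp.
by rewrite xp wp in wxy.
Qed.

Lemma gen_separates_unreached k p : (forall x, w k x <> Some p) ->
  exists2 kap, respects_all w kap & forall x y, w k x = Some y -> kap y <> kap p.
Proof.
move=> unreached; have sk := shaped_gen (w_gen k).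
have [V [rho [adj dom]]] := shaped_triple_dom (shaped_pinv sk).
have [f0 [g [f2 [adm sep]]]] := triple_separator adj (flip_ord_lt p).
exists (painted f0 g f2) => [|x y wxy]; first exact: respects_all_painted.
apply/eqP/(sep _ (dom _ _ (pinvP (shaped_pinjective sk) wxy)))/flip_ord_inj => yp.
by apply: (unreached x); rewrite -yp.
Qed.

End Valuation.

Lemma gen_in_var_B21 : in_var_B21 (gen_seq X).
Proof.
move=> s t st w w_gen.
have w_inj k : pinjective (w k) by apply/shaped_pinjective/shaped_gen.
exact: (ev_identity w_inj (gen_separates_points w_gen)
          (gen_separates_undefined w_gen) (gen_separates_unreached w_gen) st).
Qed.

End Generated.
End Shape.

Unset Implicit Arguments.

Theorem proposition5p1 (n : nat) (X : seq (pinj n)) :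
  (2 <= n)%N ->
  (forall a, a \in X -> in_Sn a) ->
  (size X < n)%N ->
  in_var_B21 (gen_seq X).
Proof. by move=> n_ge2 X_Sn size_X; apply: gen_in_var_B21. Qed.
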